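(* Let $n\ge 1$, $i\in\{1,\ldots,n-1\}$, and let $C$ be an almost-$s_i$-stable set of transpositions in $S_n$: $s_i\in C$ and there is a unique transposition $\tau$ with $\tau\in C$ but $s_i\tau s_i\notin C$. Put $C_-=C\setminus\{\tau\}$ and $C_+=C\cup\{s_i\tau s_i\}$ (which are $s_i$-stable). For a set $D$ of transpositions write $H_D^{*s_i}=\{f\in H_D\mid f*s_i=f\}$. If $\tau=(i\leftrightarrow k)$, then $$H_C=H_{C_+}^{*s_i}\oplus (x_i-x_k)H_{C_-}^{*s_i}$$ as an internal direct sum of $\mathbb{C}[t_1,\ldots,t_n]$-submodules of $H$ equipped with the dot action. Otherwise $\tau=(i+1\leftrightarrow k)$, and $$H_C=H_{C_+}^{*s_i}\oplus (x_k-x_{i+1})H_{C_-}^{*s_i}$$ as an internal direct sum of $\mathbb{C}[t_1,\ldots,t_n]$-submodules of $H$ equipped with the dot action.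
   Context: Let $S_n$ be the symmetric group on $\{1,\ldots,n\}$ with $(vw)(j)=v(w(j))$, and $s_i=(i\leftrightarrow i+1)$. Let $H=\mathrm{Fun}(S_n,\mathbb{C}[t_1,\ldots,t_n])$ with pointwise operations; it is a $\mathbb{C}[t_1,\ldots,t_n]$-module via constant functions. The star action (right) is $(f*w)(v;t_1,\ldots,t_n)=f(vw^{-1};t_1,\ldots,t_n)$, and the dot action (left) is $(w\cdot f)(v;t_1,\ldots,t_n)=f(w^{-1}v;t_{w(1)},\ldots,t_{w(n)})$. Let $x_j\in H$ be the function $v\mapsto t_{v(j)}$. For a transposition $\sigma=(a\leftrightarrow b)$, $f\in H$ satisfies condition $\sigma$ if $f-f*\sigma=(x_a-x_b)g$ for some $g\in H$; these form a subring $H_\sigma$, and for a set $D$ of transpositions $H_D=\bigcap_{\sigma\in D}H_\sigma$ (with $H_\varnothing=H$). A set $D$ of transpositions is $s_i$-stable if $s_i\in D$ and $s_iDs_i=D$. *)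

From mathcomp Require Import all_boot all_algebra all_fingroup.
From mathcomp Require Import mpoly.
From mathcomp Require Import complex.
From mathcomp Require Import Rstruct.
From Stdlib Require Reals.

Set Implicit Arguments.
Unset Strict Implicit.
Unset Printing Implicit Defensive.

Import GRing.Theory.
Local Open Scope ring_scope.

Definition CC : numClosedFieldType := complex Reals.Rdefinitions.R.

(* C[t_1,...,t_n]  (variables indexed 0..n-1: t_{j+1} is 'X_j). *)
Definition Pol (n : nat) := {mpoly CC[n]}.

Definition Hfun (n : nat) := {perm 'I_n} -> Pol n.

(* Paper's product (v w)(j) = v (w j).  MathComp's perm product is
   left-to-right: (s * t) x = t (s x), so v w (paper) = (w * v)%g. *)
Definition pcomp n (v w : {perm 'I_n}) : {perm 'I_n} := (w * v)%g.

Lemma pcompE n (v w : {perm 'I_n}) j : pcomp v w j = v (w j).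
Proof. by rewrite /pcomp permM. Qed.

Definition star n (f : Hfun n) (w : {perm 'I_n}) : Hfun n :=
  fun v => f (pcomp v w^-1).

(* dot action (left): (w . f)(v; t_1..t_n) = f(w^{-1} v; t_{w(1)},...,t_{w(n)});
   msym w p substitutes t_j := t_{w(j)} in p. *)
Definition dot n (w : {perm 'I_n}) (f : Hfun n) : Hfun n :=
  fun v => msym w (f (pcomp w^-1 v)).

Definition xfun n (j : 'I_n) : Hfun n := fun v => 'X_(v j).

Definition is_transposition n (s : {perm 'I_n}) : Prop :=
  exists a b : 'I_n, a != b /\ s = tperm a b.

Definition sat_cond n (a b : 'I_n) (f : Hfun n) : Prop :=
  exists g : Hfun n, forall v,
    f v - star f (tperm a b) v = (xfun a v - xfun b v) * g v.

Definition inHD n (D : {set {perm 'I_n}}) (f : Hfun n) : Prop :=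
  forall (sigma : {perm 'I_n}) (a b : 'I_n),
    sigma \in D -> a != b -> sigma = tperm a b -> sat_cond a b f.

Definition inHD_star n (D : {set {perm 'I_n}}) (s : {perm 'I_n}) (f : Hfun n)
  : Prop := inHD D f /\ (forall v, star f s v = f v).

Definition xdiff_mul n (a b : 'I_n) (A : Hfun n -> Prop) (f : Hfun n) : Prop :=
  exists h, A h /\ forall v, f v = (xfun a v - xfun b v) * h v.

Definition dot_submodule n (A : Hfun n -> Prop) : Prop :=
  [/\ A (fun _ => 0),
      (forall f g, A f -> A g -> A (fun v => f v + g v)),
      (forall (p : Pol n) f, A f -> A (fun v => p * f v))
    & (forall w f, A f -> A (dot w f))].

Definition internal_direct_sum n (M A B : Hfun n -> Prop) : Prop :=
  [/\ dot_submodule A, dot_submodule B,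
      (forall f, M f <-> exists g h, [/\ A g, B h & forall v, f v = g v + h v])
    & (forall f, A f -> B f -> forall v, f v = 0)].

Definition sconj n (s t : {perm 'I_n}) : {perm 'I_n} := (s * t * s)%g.

(* Write s = s_i.  If f is in H_C, condition s gives f - f*s = (x_i - x_(i+1)) h
   with h s-invariant.  Every transposition of C other than tau is conjugated by s
   into C, so f and f*s satisfy it and so does (x_i - x_(i+1)) h; the factor
   x_i - x_(i+1) cancels from such a condition (substitute t_a := t_b), so h lies
   in H_(C_-).  The factor x_p - x_q of the theorem satisfies
   (x_p - x_q) - (x_p - x_q)*s = x_i - x_(i+1), which makes g = f - (x_p - x_q) h
   s-invariant; g satisfies condition tau, hence by s-invariance also s tau s, so
   g is in H_(C_+).  The same identity shows that an s-invariant (x_p - x_q) h with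
   h s-invariant vanishes, so the sum is direct. *)

From Pilot Require Import Defs.
From mathcomp Require Import all_boot all_algebra all_fingroup.
From mathcomp Require Import mpoly.
From mathcomp Require Import ring.
(* Re-import so that [pcomp] is [Defs.pcomp] rather than [ssrfun.pcomp]. *)
Import Defs.

Set Implicit Arguments.
Unset Strict Implicit.
Unset Printing Implicit Defensive.
Import GRing.Theory.
Local Open Scope ring_scope.

Section IdentifyVariables.
Variable n : nat.
Implicit Types (a b c d j : 'I_n) (p r : Pol n).

Lemma mpolyXB_neq0 a b : a != b -> ('X_a - 'X_b : Pol n) != 0.
Proof.
move=> ab; apply/eqP => /(congr1 (mcoeff U_(a))).
rewrite mcoeffB !mcoeffXU eqxx eq_sym (negbTE ab) mcoeff0 subr0.
by move/eqP; rewrite oner_eq0.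
Qed.

Lemma msym_mpolyX (w : {perm 'I_n}) j : msym w ('X_j : Pol n) = 'X_(w j).
Proof. by rewrite /msym mmapX mmap1U. Qed.

Definition identify a b p : Pol n :=
  p \mPo [tuple 'X_(if j == a then b else j) | j < n].

Lemma identifyX a b j : identify a b 'X_j = 'X_(if j == a then b else j).
Proof. by rewrite /identify comp_mpolyXU -tnth_nth tnth_mktuple. Qed.

Lemma identifyC a b (k : CC) : identify a b k%:MP = k%:MP.
Proof. exact: comp_mpolyC. Qed.

Lemma identifyD a b : {morph identify a b : p r / p + r}.
Proof. exact: rmorphD. Qed.

Lemma identifyB a b : {morph identify a b : p r / p - r}.
Proof. exact: rmorphB. Qed.

Lemma identifyM a b : {morph identify a b : p r / p * r}.
Proof. exact: rmorphM. Qed.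

Lemma dvd_sub_identify a b p :
  exists r, p - identify a b p = ('X_a - 'X_b) * r.
Proof.
pose P p := exists r, p - identify a b p = ('X_a - 'X_b) * r.
have PD x y : P x -> P y -> P (x + y).
  by move=> [rx ex] [ry ey]; exists (rx + ry); rewrite identifyD mulrDr -ex -ey opprD addrACA.
have PM x y : P x -> P y -> P (x * y).
  move=> [rx ex] [ry ey]; exists (rx * y + identify a b x * ry).
  by rewrite identifyM mulrDr mulrA -ex mulrCA -ey mulrBl mulrBr addrA subrK.
have PC k : P k%:MP by exists 0; rewrite identifyC subrr mulr0.
have PX j : P 'X_j.
  rewrite /P identifyX; case: eqP => [->|_]; first by exists 1; rewrite mulr1.
  by exists 0; rewrite subrr mulr0.
have PXn j e : P ('X_j ^+ e).
  elim: e => [|e IH]; first by rewrite expr0 -mpolyC1; apply: PC.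
  by rewrite exprS; apply: PM (PX j) IH.
elim/mpolyind: p => [|k m p _ _ IH]; first by rewrite -mpolyC0; apply: PC.
apply: PD IH; rewrite -mul_mpolyC mpolyXE_id; apply: (PM _ _ (PC k)).
apply: (big_ind P) => [|x y|j _]; [rewrite -mpolyC1; apply: PC | exact: PM | exact: PXn].
Qed.

(* Identifying t_a with t_b kills the right-hand side but not x_c - x_d. *)
Lemma mpolyXB_dvd_cancel a b c d r q :
  a != b -> c != d -> ~~ ((c == a) && (d == b)) -> ~~ ((c == b) && (d == a)) ->
  ('X_c - 'X_d) * r = ('X_a - 'X_b) * q -> exists r', r = ('X_a - 'X_b) * r'.
Proof.
move=> ab cd not_ab not_ba /(congr1 (identify a b)).
rewrite !identifyM !identifyB !identifyX eqxx if_same subrr mul0r => /eqP.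
have identify_cd_neq0 :
    ('X_(if c == a then b else c) - 'X_(if d == a then b else d) : Pol n) != 0.
  case: (eqVneq c a) => [ca|ca]; case: (eqVneq d a) => [da|da]; apply: mpolyXB_neq0.
  - by move: cd; rewrite ca da eqxx.
  - by move: not_ab; rewrite ca eqxx eq_sym.
  - by move: not_ba; rewrite da eqxx andbT.
  - exact: cd.
rewrite mulf_eq0 (negbTE identify_cd_neq0) /= => /eqP r_identify0.
by have [r' er'] := dvd_sub_identify a b r; exists r'; rewrite -er' r_identify0 subr0.
Qed.
End IdentifyVariables.

Section Transpositions.
Variable n : nat.
Implicit Types a b c d i j : 'I_n.

Lemma tperm_eq_tperm a b c d : a != b -> tperm a b = tperm c d ->
  (a = c /\ b = d) \/ (a = d /\ b = c).
Proof.
move=> ab /(congr1 (fun t : {perm 'I_n} => t a)); rewrite tpermL.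
case: tpermP => [-> ->|-> ->|_ _ ba]; [by left | by right |].
by rewrite ba eqxx in ab.
Qed.

Lemma tperm_eq_neq a b c d : a != b -> tperm a b = tperm c d -> c != d.
Proof. by move=> ab /(tperm_eq_tperm ab) [[<- <-]|[<- <-]] //; rewrite eq_sym. Qed.

Lemma sconjE a b c d :
  sconj (tperm a b) (tperm c d) = tperm (tperm a b c) (tperm a b d).
Proof. by rewrite -tpermJ conjgE tpermV /sconj mulgA. Qed.

Lemma tperm_moved_by i j a b :
  sconj (tperm i j) (tperm a b) != tperm a b ->
  (exists k, tperm a b = tperm i k) \/ (exists k, tperm a b = tperm j k).
Proof.
have [<- _|ia] := eqVneq i a; first by left; exists b.
have [<- _|ib] := eqVneq i b; first by left; exists a; rewrite tpermC.
have [<- _|ja] := eqVneq j a; first by right; exists b.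
have [<- _|jb] := eqVneq j b; first by right; exists a; rewrite tpermC.
by rewrite sconjE !tpermD // eqxx.
Qed.
End Transpositions.

Section Conditions.
Variable n : nat.
Implicit Types (a b c d j : 'I_n) (f g h : Hfun n) (u v w : {perm 'I_n}).

Lemma pcompA u v w : pcomp (pcomp u v) w = pcomp u (pcomp v w).
Proof. by rewrite /pcomp mulgA. Qed.

Lemma pcompK_tperm v a b : pcomp (pcomp v (tperm a b)) (tperm a b) = v.
Proof. by rewrite pcompA /pcomp tperm2 mul1g. Qed.

Lemma star_tpermE f a b v : star f (tperm a b) v = f (pcomp v (tperm a b)).
Proof. by rewrite /star tpermV. Qed.

Lemma xfun_pcomp j v w : xfun j (pcomp v w) = 'X_(v (w j)).
Proof. by rewrite /xfun pcompE. Qed.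

Lemma sat_condP a b f : sat_cond a b f <->
  (forall v, exists r, f v - f (pcomp v (tperm a b)) = ('X_(v a) - 'X_(v b)) * r).
Proof.
split=> [[g eg] v|H]; first by exists (g v); rewrite -star_tpermE eg.
by have [g eg] := fin_all_exists H; exists g => v; rewrite star_tpermE eg.
Qed.

Lemma sat_cond_ext a b f g : f =1 g -> sat_cond a b f -> sat_cond a b g.
Proof.
move=> efg /sat_condP H; apply/sat_condP => v.
by have [r er] := H v; exists r; rewrite -!efg.
Qed.

Lemma sat_condC a b f : sat_cond a b f -> sat_cond b a f.
Proof.
move/sat_condP => H; apply/sat_condP => v.
by have [r er] := H v; exists (- r); rewrite tpermC er mulrN -mulNr opprB.
Qed.

Lemma sat_cond_tperm a b c d f : a != b -> tperm a b = tperm c d ->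
  sat_cond c d f -> sat_cond a b f.
Proof. by move=> ab /(tperm_eq_tperm ab) [[-> ->]|[-> ->]] //; apply: sat_condC. Qed.

Lemma sat_condD a b f g : sat_cond a b f -> sat_cond a b g ->
  sat_cond a b (fun v => f v + g v).
Proof.
move=> /sat_condP Hf /sat_condP Hg; apply/sat_condP => v.
have [r1 e1] := Hf v; have [r2 e2] := Hg v; exists (r1 + r2).
by rewrite mulrDr -e1 -e2 opprD addrACA.
Qed.

Lemma sat_condB a b f g : sat_cond a b f -> sat_cond a b g ->
  sat_cond a b (fun v => f v - g v).
Proof.
move=> /sat_condP Hf /sat_condP Hg; apply/sat_condP => v.
have [r1 e1] := Hf v; have [r2 e2] := Hg v; exists (r1 - r2).
rewrite mulrBr -e1 -e2; ring.
Qed.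

Lemma sat_condM a b f g : sat_cond a b f -> sat_cond a b g ->
  sat_cond a b (fun v => f v * g v).
Proof.
move=> /sat_condP Hf /sat_condP Hg; apply/sat_condP => v.
have [r1 e1] := Hf v; have [r2 e2] := Hg v.
exists (r1 * g v + f (pcomp v (tperm a b)) * r2).
rewrite mulrDr mulrA -e1 mulrCA -e2; ring.
Qed.

Lemma sat_cond_const a b (p : Pol n) : sat_cond a b (fun _ => p).
Proof. by apply/sat_condP => v; exists 0; rewrite subrr mulr0. Qed.

Lemma sat_cond_xfun a b j : sat_cond a b (xfun j).
Proof.
apply/sat_condP => v; rewrite xfun_pcomp /xfun.
case: tpermP => [->|->|_ _]; first by exists 1; rewrite mulr1.
  by exists (-1); rewrite mulrN1 opprB.
by exists 0; rewrite subrr mulr0.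
Qed.

Lemma sat_cond_xdiff_mul a b h : sat_cond a b (fun v => (xfun a v - xfun b v) * h v).
Proof.
apply/sat_condP => v; exists (h v + h (pcomp v (tperm a b))).
rewrite !xfun_pcomp tpermL tpermR /xfun; ring.
Qed.

Lemma sat_cond_star a b c d f : sat_cond a b f ->
  sat_cond (tperm c d a) (tperm c d b) (star f (tperm c d)).
Proof.
move/sat_condP => H; apply/sat_condP => v; rewrite !star_tpermE.
have -> : pcomp (pcomp v (tperm (tperm c d a) (tperm c d b))) (tperm c d)
        = pcomp (pcomp v (tperm c d)) (tperm a b).
  by rewrite -tpermJ conjgE tpermV /pcomp !mulgA tperm2 mul1g.
by have [r er] := H (pcomp v (tperm c d)); exists r; rewrite er !pcompE.
Qed.

Lemma sat_cond_star_invariant a b c d f :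
  (forall v, f (pcomp v (tperm c d)) = f v) -> sat_cond a b f ->
  sat_cond (tperm c d a) (tperm c d b) f.
Proof.
move=> fcd /(sat_cond_star c d); apply: sat_cond_ext => v.
by rewrite star_tpermE fcd.
Qed.

Lemma sat_cond_dot a b f w : sat_cond a b f -> sat_cond a b (dot w f).
Proof.
move/sat_condP => H; apply/sat_condP => v; rewrite /dot -pcompA.
have [r er] := H (pcomp w^-1 v); exists (msym w r).
by rewrite -msymB er msymM msymB !msym_mpolyX !pcompE !permKV.
Qed.

Lemma star_dot w f t v : star (dot w f) t v = dot w (star f t) v.
Proof. by rewrite /star /dot pcompA. Qed.

Lemma sat_cond_quotient a b f : a != b -> sat_cond a b f -> exists h,
  (forall v, f v - f (pcomp v (tperm a b)) = (xfun a v - xfun b v) * h v) /\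
  (forall v, h (pcomp v (tperm a b)) = h v).
Proof.
move=> ab [g eg]; exists g.
have ef v : f v - f (pcomp v (tperm a b)) = (xfun a v - xfun b v) * g v.
  by rewrite -star_tpermE eg.
split=> // v.
have nz : xfun a v - xfun b v != 0 by apply: mpolyXB_neq0; rewrite (inj_eq perm_inj).
have e2 := ef (pcomp v (tperm a b)).
rewrite pcompK_tperm !xfun_pcomp tpermL tpermR in e2.
have : (xfun a v - xfun b v) * (g (pcomp v (tperm a b)) - g v) = 0.
  rewrite mulrBr -ef /xfun.
  have -> : ('X_(v a) - 'X_(v b)) * g (pcomp v (tperm a b))
          = - (('X_(v b) - 'X_(v a)) * g (pcomp v (tperm a b))) by ring.
  rewrite -e2; ring.
by move/eqP; rewrite mulf_eq0 (negbTE nz) subr_eq0 => /eqP.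
Qed.

Lemma sat_cond_xdiff_cancel c d a b h : c != d -> a != b -> tperm a b != tperm c d ->
  sat_cond a b (fun v => (xfun c v - xfun d v) * h v) -> sat_cond a b h.
Proof.
move=> cd ab ab_ne_cd /sat_condP Hch; apply/sat_condP => v.
have /sat_condP Hcd := sat_condB (sat_cond_xfun a b c) (sat_cond_xfun a b d).
have [r1 e1] := Hch v; have [r2 e2] := Hcd v.
have vinj := inj_eq (@perm_inj _ v).
apply: (@mpolyXB_dvd_cancel _ _ _ (v c) (v d) _ (r1 - r2 * h (pcomp v (tperm a b)))).
- by rewrite vinj.
- by rewrite vinj.
- by rewrite !vinj; apply: contra ab_ne_cd => /andP [/eqP -> /eqP ->].
- by rewrite !vinj; apply: contra ab_ne_cd => /andP [/eqP -> /eqP ->]; rewrite tpermC.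
- by rewrite [RHS]mulrBr [in RHS]mulrA -e1 -e2 /xfun; ring.
Qed.
End Conditions.

Section Subspaces.
Variable n : nat.
Implicit Types (D : {set {perm 'I_n}}) (a b p q : 'I_n) (f g h : Hfun n).

Lemma inHDP D f :
  inHD D f <-> forall a b, a != b -> tperm a b \in D -> sat_cond a b f.
Proof.
split=> [Hf a b ab abD | Hf sigma a b sD ab esigma]; first exact: Hf abD ab _.
by apply: Hf ab _; rewrite -esigma.
Qed.

Lemma inHD_ext D f g : f =1 g -> inHD D f -> inHD D g.
Proof.
by move=> efg /inHDP Hf; apply/inHDP => a b ab abD; apply: sat_cond_ext efg (Hf a b ab abD).
Qed.

Lemma inHDD D f g : inHD D f -> inHD D g -> inHD D (fun v => f v + g v).
Proof.
move=> /inHDP Hf /inHDP Hg; apply/inHDP => a b ab abD.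
exact: sat_condD (Hf a b ab abD) (Hg a b ab abD).
Qed.

Lemma inHDB D f g : inHD D f -> inHD D g -> inHD D (fun v => f v - g v).
Proof.
move=> /inHDP Hf /inHDP Hg; apply/inHDP => a b ab abD.
exact: sat_condB (Hf a b ab abD) (Hg a b ab abD).
Qed.

Lemma inHD_subset D D' f : D \subset D' -> inHD D' f -> inHD D f.
Proof.
move=> /subsetP DD' /inHDP Hf; apply/inHDP => a b ab abD.
exact: Hf ab (DD' _ abD).
Qed.

Lemma inHD_xdiff_mul D p q h :
  inHD (D :\ tperm p q) h -> inHD D (fun v => (xfun p v - xfun q v) * h v).
Proof.
move=> /inHDP Hh; apply/inHDP => a b ab abD.
have [e_pq | ne_pq] := eqVneq (tperm a b) (tperm p q).
  exact: sat_cond_tperm ab e_pq (sat_cond_xdiff_mul _ _ _).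
apply: sat_condM; first exact: sat_condB (sat_cond_xfun a b p) (sat_cond_xfun a b q).
by apply: Hh ab _; rewrite in_setD1 ne_pq.
Qed.

Lemma inHD_star_dot_submodule D t : dot_submodule (inHD_star D t).
Proof.
split.
- by split=> // sigma a b _ _ _; apply: sat_cond_const.
- move=> f g [Hf Sf] [Hg Sg]; split=> [sigma a b sD ab esigma|v].
    by apply: sat_condD; [apply: (Hf sigma) | apply: (Hg sigma)].
  by change (star f t v + star g t v = f v + g v); rewrite Sf Sg.
- move=> r f [Hf Sf]; split=> [sigma a b sD ab esigma|v].
    by apply: sat_condM (sat_cond_const _ _ _) _; apply: (Hf sigma).
  by change (r * star f t v = r * f v); rewrite Sf.
- move=> w f [Hf Sf]; split=> [sigma a b sD ab esigma|v].
    by apply: sat_cond_dot; apply: (Hf sigma).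
  by rewrite star_dot /dot Sf.
Qed.

Lemma xdiff_mul_dot_submodule p q (A : Hfun n -> Prop) :
  dot_submodule A -> dot_submodule (xdiff_mul p q A).
Proof.
move=> [A0 AD AM Adot]; split.
- by exists (fun _ => 0); split=> // v; rewrite mulr0.
- move=> f g [h1 [Ah1 e1]] [h2 [Ah2 e2]].
  by exists (fun v => h1 v + h2 v); split=> [|v]; [apply: AD | rewrite e1 e2 mulrDr].
- move=> r f [h [Ah e]].
  by exists (fun v => r * h v); split=> [|v]; [apply: AM | rewrite e mulrCA].
- move=> w f [h [Ah e]]; exists (dot w h); split=> [|v]; first exact: Adot.
  by rewrite /dot e msymM msymB !msym_mpolyX /xfun !pcompE !permKV.
Qed.
End Subspaces.

Section Decomposition.
Variables (n : nat) (i i1 p q : 'I_n) (C : {set {perm 'I_n}}).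
Local Notation s := (tperm i i1).
Local Notation tau := (tperm p q).
Hypotheses (ii1 : i != i1) (pq : p != q) (sC : s \in C) (tauC : tau \in C).
Hypothesis tau_unique : forall a b, a != b -> tperm a b \in C ->
  sconj s (tperm a b) \notin C -> tperm a b = tau.
(* (x_p - x_q) - (x_p - x_q) * s = x_i - x_(i+1): this holds for the factor
   (p, q) = (i, k) resp. (k, i+1) of the theorem, and is all that is used of it. *)
Hypothesis xdiff_shift : 'X_p - 'X_q - ('X_(s p) - 'X_(s q)) = 'X_i - 'X_i1 :> Pol n.

Local Notation complement f h := (fun v => f v - (xfun p v - xfun q v) * h v).

Lemma xdiff_shift_at v : xfun p v - xfun q v - (xfun p (pcomp v s) - xfun q (pcomp v s))
  = xfun i v - xfun i1 v.
Proof.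
have := congr1 (msym v) xdiff_shift; rewrite !msymB !msym_mpolyX.
by rewrite !xfun_pcomp.
Qed.

Lemma quotient_inHD f h : inHD C f ->
  (forall v, f v - f (pcomp v s) = (xfun i v - xfun i1 v) * h v) ->
  (forall v, h (pcomp v s) = h v) -> inHD (C :\ tau) h.
Proof.
move=> /inHDP Hf ef hs; apply/inHDP => a b ab.
rewrite in_setD1 => /andP [ab_ne_tau abC].
have [ab_s | ab_ne_s] := eqVneq (tperm a b) s.
  apply: sat_cond_tperm ab ab_s _; apply/sat_condP => v.
  by exists 0; rewrite hs subrr mulr0.
have sabC : sconj s (tperm a b) \in C.
  by apply: contraNT ab_ne_tau => /(tau_unique ab abC) ->.
have sab : s a != s b by rewrite (inj_eq perm_inj).
rewrite sconjE in sabC; have := sat_cond_star i i1 (Hf _ _ sab sabC).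
rewrite !tpermK => /(sat_condB (Hf a b ab abC)) Hdiff.
apply: sat_cond_xdiff_cancel ii1 ab ab_ne_s _.
by apply: sat_cond_ext Hdiff => v; rewrite star_tpermE ef.
Qed.

Lemma complement_star_invariant f h :
  (forall v, f v - f (pcomp v s) = (xfun i v - xfun i1 v) * h v) ->
  (forall v, h (pcomp v s) = h v) ->
  forall v, complement f h (pcomp v s) = complement f h v.
Proof.
move=> ef hs v /=; rewrite hs.
have -> : f (pcomp v s) = f v - (xfun i v - xfun i1 v) * h v by rewrite -ef; ring.
rewrite -xdiff_shift_at; ring.
Qed.

Lemma complement_inHD f h : inHD C f -> inHD (C :\ tau) h ->
  (forall v, complement f h (pcomp v s) = complement f h v) ->
  inHD (sconj s tau |: C) (complement f h).
Proof.
move=> Hf Hh gs; have /inHDP gC := inHDB Hf (inHD_xdiff_mul Hh).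
apply/inHDP => a b ab /setU1P [ab_stau|]; last exact: gC.
apply: sat_cond_tperm ab _ (sat_cond_star_invariant gs (gC p q pq tauC)).
by rewrite ab_stau sconjE.
Qed.

Lemma star_invariant_xdiff_mul_eq0 f h :
  (forall v, f (pcomp v s) = f v) -> (forall v, h (pcomp v s) = h v) ->
  (forall v, f v = (xfun p v - xfun q v) * h v) -> forall v, h v = 0.
Proof.
move=> fs hs ef v; have e_vs := ef (pcomp v s); rewrite fs hs in e_vs.
have nz : xfun i v - xfun i1 v != 0 by apply: mpolyXB_neq0; rewrite (inj_eq perm_inj).
have : (xfun i v - xfun i1 v) * h v = 0.
  by rewrite -xdiff_shift_at mulrBl -ef -e_vs subrr.
by move/eqP; rewrite mulf_eq0 (negbTE nz) => /eqP.
Qed.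

Lemma decomposition : internal_direct_sum (inHD C)
  (inHD_star (sconj s tau |: C) s) (xdiff_mul p q (inHD_star (C :\ tau) s)).
Proof.
split.
- exact: inHD_star_dot_submodule.
- exact/xdiff_mul_dot_submodule/inHD_star_dot_submodule.
- move=> f; split=> [Hf | [g [h [[Hg _] [h' [[Hh' _] eh]] ef]]]]; last first.
    have Hg' := inHD_subset (subsetUr _ _) Hg.
    by apply: inHD_ext (inHDD Hg' (inHD_xdiff_mul Hh')) => v; rewrite ef eh.
  have /inHDP/(_ i i1 ii1 sC) Hs := Hf.
  have [h [ef hs]] := sat_cond_quotient ii1 Hs.
  have Hh := quotient_inHD Hf ef hs.
  have gs := complement_star_invariant ef hs.
  exists (complement f h), (fun v => (xfun p v - xfun q v) * h v).
  split=> [||v]; last by rewrite subrK.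
    by split=> [|v]; [apply: complement_inHD | rewrite star_tpermE; apply: gs].
  by exists h; split=> //; split=> // v; rewrite star_tpermE hs.
- move=> f [_ fs] [h [[_ hs] ef]] v.
  have fs' v' : f (pcomp v' s) = f v' by rewrite -star_tpermE fs.
  have hs' v' : h (pcomp v' s) = h v' by rewrite -star_tpermE hs.
  by rewrite ef (star_invariant_xdiff_mul_eq0 fs' hs' ef) mulr0.
Qed.
End Decomposition.

Unset Implicit Arguments.
Theorem theorem2 (n : nat) (i i1 : 'I_n) (hi1 : nat_of_ord i1 = (nat_of_ord i).+1)
  (C : {set {perm 'I_n}}) (tau : {perm 'I_n})
  (hCtr : forall sigma, sigma \in C -> is_transposition sigma)
  (hsC : tperm i i1 \in C)
  (htauC : tau \in C)
  (htauC' : sconj (tperm i i1) tau \notin C)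
  (htau_uniq : forall sigma, is_transposition sigma -> sigma \in C ->
                 sconj (tperm i i1) sigma \notin C -> sigma = tau) :
  (forall k : 'I_n, tau = tperm i k ->
     internal_direct_sum (inHD C)
       (inHD_star (sconj (tperm i i1) tau |: C) (tperm i i1))
       (xdiff_mul i k (inHD_star (C :\ tau) (tperm i i1))))
  /\
  (~ (exists k : 'I_n, tau = tperm i k) ->
     exists k : 'I_n, tau = tperm i1 k /\
     internal_direct_sum (inHD C)
       (inHD_star (sconj (tperm i i1) tau |: C) (tperm i i1))
       (xdiff_mul k i1 (inHD_star (C :\ tau) (tperm i i1)))).
Proof.
have ii1 : i != i1 by apply/eqP => /(congr1 val); rewrite /= hi1 => /n_Sn.
have tau_unique a b : a != b -> tperm a b \in C ->
    sconj (tperm i i1) (tperm a b) \notin C -> tperm a b = tau.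
  by move=> ab; apply: htau_uniq; exists a, b.
have [a [b [ab etau]]] := hCtr _ htauC.
have tau_moved : sconj (tperm i i1) tau != tau by apply: contraNneq htauC' => ->.
have tau_ne_s : tau != tperm i i1.
  by apply: contraNneq htauC' => ->; rewrite sconjE tpermL tpermR tpermC.
split=> [k etau_k | tau_not_i].
- have ik : i != k by apply: tperm_eq_neq ab _; rewrite -etau -etau_k.
  have i1k : i1 != k by apply: contraNneq tau_ne_s => ->; rewrite etau_k.
  rewrite etau_k in htauC tau_unique *.
  apply: (decomposition ii1 ik hsC htauC tau_unique).
  by rewrite tpermL tpermD //; ring.
- rewrite etau in tau_moved; have [[k ek]|[k ek]] := tperm_moved_by tau_moved.
    by case: tau_not_i; exists k; rewrite etau ek.
  have i1k : i1 != k by apply: tperm_eq_neq ab ek.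
  have ik : i != k by apply/eqP => ik; apply: tau_not_i; exists i1; rewrite etau ek -ik tpermC.
  rewrite -etau in ek; exists k; split; first exact: ek.
  rewrite ek (tpermC i1 k) in htauC tau_unique *.
  apply: (decomposition ii1 _ hsC htauC tau_unique); first by rewrite eq_sym.
  by rewrite tpermR tpermD //; ring.
Qed.
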